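(* Let $P\subset\mathbb{R}^n$ be a pointed polyhedral set of dimension $n$. Then the base map $\mathrm{base}_P:P\to K_P$ is continuous.
   Context: For a polyhedral set $P$, $\mathrm{char.cone}(P)=\{y:x+y\in P\ \forall x\in P\}$; $P$ is pointed if $\mathrm{char.cone}(P)\cap-\mathrm{char.cone}(P)=\{0\}$. $K_P$ is the convex hull of the vertices of $P$. For $p\in P$, $\mathrm{base}_P(p)$ is the unique point $x\in K_P$ with $p-x\in\mathrm{char.cone}(P)$ minimizing $|p-x|$ among all such points (existence and uniqueness hold for pointed $P$). *)

(* Vectors of R^n are column vectors 'cV[R]_n,
   with the topology MathComp-Analysis puts on matrices (product topology). *)
From HB Require Import structures.
From mathcomp Require Import all_boot all_order all_algebra.
From mathcomp Require Import all_classical all_reals all_analysis.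
Set Implicit Arguments. Unset Strict Implicit. Unset Printing Implicit Defensive.
Import Order.TTheory GRing.Theory Num.Theory.
Local Open Scope ring_scope.
Local Open Scope classical_set_scope.

Section Polyhedra.
Variables (R : realType) (n : nat).
Implicit Types (P : set 'cV[R]_n) (x y p : 'cV[R]_n).

Definition enorm (v : 'cV[R]_n) : R := Num.sqrt (\sum_(i < n) v i 0 ^+ 2).

Definition polyhedron (m : nat) (A : 'M[R]_(m, n)) (b : 'cV[R]_m) : set 'cV[R]_n :=
  [set x | forall i : 'I_m, (A *m x) i 0 <= b i 0].

Definition polyhedral P : Prop :=
  exists (m : nat) (A : 'M[R]_(m, n)) (b : 'cV[R]_m), P = polyhedron A b.

Definition char_cone P : set 'cV[R]_n := [set y | forall x, P x -> P (x + y)].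

Definition pointed P : Prop :=
  forall y, char_cone P y -> char_cone P (- y) -> y = 0.

Definition vertex P x : Prop :=
  P x /\ forall y z (t : R), P y -> P z -> 0 < t < 1 ->
    x = t *: y + (1 - t) *: z -> y = z.

Definition conv_hull (S : set 'cV[R]_n) : set 'cV[R]_n :=
  [set x | exists (k : nat) (v : 'I_k -> 'cV[R]_n) (l : 'I_k -> R),
     (forall i, S (v i)) /\ (forall i, 0 <= l i) /\ \sum_(i < k) l i = 1 /\
     x = \sum_(i < k) l i *: v i].

Definition aff_hull (S : set 'cV[R]_n) : set 'cV[R]_n :=
  [set x | exists (k : nat) (v : 'I_k -> 'cV[R]_n) (l : 'I_k -> R),
     (forall i, S (v i)) /\ \sum_(i < k) l i = 1 /\
     x = \sum_(i < k) l i *: v i].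

Definition full_dim P : Prop := aff_hull P = setT.

Definition KP P : set 'cV[R]_n := conv_hull (vertex P).

Definition is_base P p x : Prop :=
  KP P x /\ char_cone P (p - x) /\
  forall y, KP P y -> char_cone P (p - y) -> enorm (p - x) <= enorm (p - y).

(* base_P(p): the (unique, for pointed P) such point, chosen classically *)
Definition base P p : 'cV[R]_n := xget 0 [set x | is_base P p x].

End Polyhedra.

From HB Require Import structures.
From mathcomp Require Import all_boot all_order all_algebra.
From mathcomp Require Import all_classical all_reals all_analysis.
From mathcomp Require Import ring lra.
Import Order.TTheory GRing.Theory Num.Theory.
Import numFieldNormedType.Exports.
Local Open Scope ring_scope.
Local Open Scope classical_set_scope.

(* A vertex is determined by its set of tight constraints,
   so K_P is the convex hull of finitely many points, hence compact and convex.
   Pointedness gives P = K_P + char.cone(P), so the feasible set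
   F(p) = {x in K_P | p - x in char.cone(P)} is nonempty, compact and convex, and
   base_P(p) is the unique point of F(p) nearest to p. Continuity is a maximum-theorem
   argument: F has closed graph with values in the compact K_P, and it is lower
   semicontinuous because from p one can move a fixed distance towards any point of P.
   Hence every cluster point of base_P(q) as q -> p lies in F(p) and is at least as
   close to p as base_P(p), so it is base_P(p). *)

Lemma mx_norm_ge_entry (R : realType) p q (x : 'M[R]_(p, q)) i j : `|x i j| <= `|x|.
Proof.
change (`|x i j| <= mx_norm x); rewrite mx_normrE.
exact: (le_bigmax _ (fun ij : 'I_p * 'I_q => `|x ij.1 ij.2|) (i, j)).
Qed.

Lemma mx_norm_le_entries (R : realType) p q (x : 'M[R]_(p, q)) M :
  0 <= M -> (forall i j, `|x i j| <= M) -> `|x| <= M.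
Proof.
move=> M0 h; change (mx_norm x <= M); rewrite mx_normrE.
by apply: bigmax_le => // ij _; exact: h.
Qed.

Lemma conv_eq_ub {R : realType} {t a c B : R} : 0 < t < 1 -> a <= B -> c <= B ->
  t * a + (1 - t) * c = B -> a = B.
Proof.
move=> /andP[t0 t1] aB cB e; apply/eqP; rewrite eq_le aB /= leNgt; apply/negP => lt.
suff : t * a + (1 - t) * c < t * B + (1 - t) * B by rewrite e; lra.
by rewrite ltr_leD // ?ltr_pM2l // ler_wpM2l // subr_ge0 ltW.
Qed.

Lemma exists_small_scale {R : realType} {I : finType} {c s : I -> R} :
  (forall i, 0 <= s i) -> (forall i, 0 < c i -> 0 < s i) ->
  exists2 t, 0 < t & t <= 1 /\ forall i, t * c i <= s i.
Proof.
move=> s0 cs.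
have scale_down t t' i : 0 < t -> t <= t' -> t' * c i <= s i -> t * c i <= s i.
  move=> t0 tt' h; have [ci0|ci0] := leP 0 (c i).
    exact: le_trans (ler_wpM2r ci0 tt') h.
  by apply: le_trans (s0 i); rewrite pmulr_rle0 // ltW.
suff [t t0 [t1 ht]] :
    exists2 t, 0 < t & t <= 1 /\ forall i, i \in enum I -> t * c i <= s i.
  by exists t => //; split => // i; apply: ht; rewrite mem_enum.
elim: (enum I) => [|i r [t' t'0 [t'1 ht']]]; first by exists 1 => //; split.
have [ci0|ci0] := leP (c i) 0.
  exists t' => //; split => // j; rewrite inE => /orP[/eqP->|]; last exact: ht'.
  by apply: le_trans (s0 i); rewrite pmulr_rle0.
have tmin0 : 0 < Num.min t' (s i / c i) by rewrite lt_min t'0 divr_gt0 ?cs.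
exists (Num.min t' (s i / c i)) => //; split; first by rewrite ge_min t'1.
move=> j; rewrite inE => /orP[/eqP->|jr].
  apply: (scale_down _ (s i / c i)) => //; first by rewrite ge_min lexx orbT.
  by rewrite divfK // gt_eqF.
by apply: (scale_down _ t') => //; [rewrite ge_min lexx | exact: ht'].
Qed.

Lemma continuous_dist_lt {R : realType} {T : pseudoMetricNormedZmodType R}
    {f : T -> R} (u : T) {e : R} :
  continuous f -> 0 < e ->
  exists2 d, 0 < d & forall v, `|v - u| < d -> `|f v - f u| < e.
Proof.
move=> cf e0; have /nbhs_ballP [d d0 hd] := cf u _ (nbhsx_ballx (f u) _ e0).
exists d => // v hv.
have : ball u d v by rewrite -ball_normE /= distrC.
by move/hd; rewrite -ball_normE /= distrC.
Qed.

Lemma cluster_sub1_cvg {T : topologicalType} (F : set_system T) (V : set T) (x : T) :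
  ProperFilter F -> compact V -> F V -> cluster F `<=` [set x] -> F --> x.
Proof.
move=> PF cV FV clx U /= xU; rewrite nbhs_simpl; apply: contrapT => nFU.
have PH : ProperFilter (within (~` U) F).
  apply: Build_ProperFilter.
  by move=> /(filterS (fun y (nUy : ~ U y -> False) => contrapT nUy)).
have HV : within (~` U) F V by apply: filterS FV => y Vy _.
have [z [_ clz]] := cV _ PH HV.
have zx : z = x.
  by apply: clx => A B FA; apply: clz; apply: filterS FA => y Ay _.
by move: clz; rewrite zx => /(_ _ _ (withinT _ _) xU) [y []].
Qed.

Lemma subset_conv_hull {R : realType} {n : nat} (S : set 'cV[R]_n) : S `<=` conv_hull S.
Proof.
move=> x Sx; exists 1%N, (fun=> x), (fun=> 1).
by rewrite !big_ord1 scale1r.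
Qed.

Section ConvexHullOfSeq.
Variables (R : realType) (n : nat) (s : seq 'cV[R]_n).
Local Notation hull := (conv_hull [set x | x \in s]).

Definition simplex k : set 'rV[R]_k :=
  [set l | (forall j, 0 <= l 0 j) /\ \sum_j l 0 j = 1].

Definition hull_comb (l : 'rV[R]_(size s)) : 'cV[R]_n := \sum_j l 0 j *: s`_j.

Lemma conv_hull_seqE : hull = hull_comb @` simplex (size s).
Proof.
apply/seteqP; split => x; last first.
  move=> [l [l0 l1] <-]; exists (size s), (nth 0 s), (l 0).
  by split => // i; exact: mem_nth.
move=> [k [v [l [vs [l0 [l1 ->]]]]]].
have vi i : (index (v i) s < size s)%N by rewrite index_mem vs.
pose lam := \row_(j < size s) \sum_(i < k | index (v i) s == j) l i.
have sum_fiber (V : nmodType) (G : 'I_k -> V) :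
    \sum_(j < size s) \sum_(i < k | index (v i) s == j) G i = \sum_i G i.
  rewrite (exchange_big_dep xpredT) //=; apply: eq_bigr => i _.
  by rewrite (big_pred1 (Ordinal (vi i))) // => j; rewrite /= eq_sym.
exists lam.
  split => [j|]; first by rewrite mxE; apply: sumr_ge0 => i _.
  by under eq_bigr do rewrite mxE; rewrite sum_fiber.
rewrite /hull_comb -(sum_fiber _ (fun i => l i *: v i)); apply: eq_bigr => j _.
rewrite mxE scaler_suml; apply: eq_bigr => i /eqP <-.
by rewrite nth_index ?vs.
Qed.

Lemma simplex_compact k : compact (simplex k).
Proof.
apply: bounded_closed_compact.
  exists 1; split => // M M1 l [l0 l1] /=.
  apply: le_trans (ltW M1); apply: mx_norm_le_entries => // i j.
  rewrite (ord1 i) ger0_norm // -l1 (bigD1 j) //= lerDl.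
  by apply: sumr_ge0 => k' _.
have -> : simplex k =
    (\bigcap_(j in [set: 'I_k]) ((fun l : 'rV[R]_k => l 0 j) @^-1` [set r | 0 <= r]))
    `&` ((fun l : 'rV[R]_k => \sum_j l 0 j) @^-1` [set 1]).
  apply/seteqP; split => l /=; first by move=> [h1 h2]; split => // j _; exact: h1.
  by move=> [h1 h2]; split => // j; exact: h1.
apply: closedI.
  apply: closed_bigI => j _; apply: preimage_closed; last exact: closed_ge.
  by move=> l _; exact: (@coord_continuous _ 1 k 0 j).
apply: preimage_closed; last exact: closed_eq.
move=> l _; apply: continuous_big => [|j _]; first exact: (@add_continuous R^o).
exact: (@coord_continuous _ 1 k 0 j).
Qed.

Lemma hull_comb_continuous : continuous hull_comb.
Proof.
apply: continuous_big => [|j _]; first exact: add_continuous.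
by move=> l; apply: continuousZr_tmp; exact: (@coord_continuous _ 1 _ 0 j).
Qed.

Lemma conv_hull_seq_compact : compact hull.
Proof.
rewrite conv_hull_seqE; apply: continuous_compact; last exact: simplex_compact.
exact/continuous_subspaceT/hull_comb_continuous.
Qed.

Lemma conv_hull_seq_convex x y t :
  hull x -> hull y -> 0 <= t <= 1 -> hull (t *: x + (1 - t) *: y).
Proof.
rewrite conv_hull_seqE => -[l [l0 l1] <-] [l' [l0' l1'] <-] /andP[t0 t1].
exists (t *: l + (1 - t) *: l').
  split => [j|]; first by rewrite !mxE addr_ge0 // mulr_ge0 // subr_ge0.
  under eq_bigr do rewrite !mxE.
  by rewrite big_split /= -!mulr_sumr l1 l1' !mulr1 subrKC.
rewrite /hull_comb !scaler_sumr -big_split /=; apply: eq_bigr => j _.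
by rewrite !mxE !scalerA -scalerDl.
Qed.

Lemma conv_hull_seq_norm_le x :
  hull x -> `|x| <= \sum_(v <- s) `|v|.
Proof.
rewrite conv_hull_seqE (big_nth 0) big_mkord => -[l [l0 l1] <-].
apply: le_trans (ler_norm_sum _ _ _) _; apply: ler_sum => j _.
rewrite normrZ ger0_norm // ler_piMl //.
by rewrite -l1 (bigD1 j) //= lerDl; apply: sumr_ge0 => k _.
Qed.

End ConvexHullOfSeq.

Section SquaredNorm.
Context {R : realType} {n : nat}.
Implicit Types u v : 'cV[R]_n.

Definition sqnorm v : R := \sum_(i < n) v i 0 ^+ 2.

Lemma sqnorm_ge0 v : 0 <= sqnorm v.
Proof. by apply: sumr_ge0 => i _; exact: sqr_ge0. Qed.

Lemma enorm_le u v : (enorm u <= enorm v) = (sqnorm u <= sqnorm v).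
Proof. by rewrite /enorm ler_sqrt // sqnorm_ge0. Qed.

Lemma sqnorm_eq0 v : (sqnorm v == 0) = (v == 0).
Proof.
apply/idP/eqP => [|->]; last by rewrite /sqnorm big1 // => i _; rewrite mxE expr0n.
rewrite psumr_eq0 => [/allP h|i _]; last exact: sqr_ge0.
apply/matrixP => i j; rewrite (ord1 j) mxE.
by have := h i (mem_index_enum _); rewrite sqrf_eq0 => /eqP.
Qed.

Lemma sqnorm_midpoint u v :
  sqnorm (2^-1 *: u + (1 - 2^-1) *: v) = (sqnorm u + sqnorm v) / 2 - sqnorm (u - v) / 4.
Proof.
rewrite /sqnorm -big_split /= !mulr_suml -sumrB; apply: eq_bigr => i _.
by rewrite !mxE; field.
Qed.

Lemma sqnorm_continuous : continuous sqnorm.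
Proof.
apply: continuous_big => [|i _]; first exact: (@add_continuous R^o).
move=> x; rewrite /GRing.exp /=.
apply: (@continuousM _ _ (fun x : 'cV[R]_n => x i 0) (fun x : 'cV[R]_n => x i 0));
  exact: (@coord_continuous _ n 1 i 0).
Qed.

End SquaredNorm.

Section Polyhedron.
Variables (R : realType) (n m : nat) (A : 'M[R]_(m, n)) (b : 'cV[R]_m).
Local Notation P := (polyhedron A b).
Local Notation C := (char_cone P).

Definition arow i (x : 'cV[R]_n) : R := (A *m x) i 0.

Lemma arowD i x y : arow i (x + y) = arow i x + arow i y.
Proof. by rewrite /arow mulmxDr mxE. Qed.

Lemma arowZ i t x : arow i (t *: x) = t * arow i x.
Proof. by rewrite /arow -scalemxAr mxE. Qed.

Lemma arowN i x : arow i (- x) = - arow i x.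
Proof. by rewrite /arow mulmxN mxE. Qed.

Lemma arowB i x y : arow i (x - y) = arow i x - arow i y.
Proof. by rewrite arowD arowN. Qed.

Lemma arow_continuous i : continuous (arow i).
Proof.
have -> : arow i = fun x => \sum_(j < n) A i j * x j 0.
  by apply/funext => x; rewrite /arow mxE.
apply: continuous_big => [|j _]; first exact: (@add_continuous R^o).
move=> x; apply: (@continuousM _ _ (cst (A i j)) (fun x : 'cV[R]_n => x j 0)).
  exact: cst_continuous.
exact: (@coord_continuous _ n 1 j 0).
Qed.

Lemma polyhedron_convex x y t : P x -> P y -> 0 <= t <= 1 -> P (t *: x + (1 - t) *: y).
Proof.
move=> Px Py /andP[t0 t1] i; rewrite -/(arow i _) arowD !arowZ.
have := Px i; have := Py i; rewrite -/(arow i x) -/(arow i y) => hy hx.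
have -> : b i 0 = t * b i 0 + (1 - t) * b i 0 by ring.
by rewrite lerD // ler_wpM2l // subr_ge0.
Qed.

Lemma polyhedron_closed : closed P.
Proof.
have -> : P = \bigcap_(i in [set: 'I_m]) (arow i @^-1` [set r | r <= b i 0]).
  by apply/seteqP; split => x /= h i; [move=> _; exact: h | exact: h].
apply: closed_bigI => i _; apply: preimage_closed; last exact: closed_le.
by move=> x _; exact: arow_continuous.
Qed.

Lemma char_coneP y : (forall i, arow i y <= 0) -> C y.
Proof.
move=> hy x Px i; rewrite -/(arow i _) arowD.
by rewrite -[b i 0]addr0 lerD // ?hy //; exact: Px.
Qed.

Lemma char_cone0 : C 0.
Proof. by move=> x Px; rewrite addr0. Qed.

Lemma char_coneD y z : C y -> C z -> C (y + z).
Proof. by move=> hy hz x Px; rewrite addrA; apply/hz/hy. Qed.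

Lemma char_cone_convex y z t : C y -> C z -> 0 <= t <= 1 -> C (t *: y + (1 - t) *: z).
Proof.
move=> hy hz ht x Px.
have -> : x + (t *: y + (1 - t) *: z) = t *: (x + y) + (1 - t) *: (x + z).
  by rewrite !scalerDr addrACA -scalerDl (addrC t) subrK scale1r.
by apply: polyhedron_convex => //; [apply: hy | apply: hz].
Qed.

Lemma char_cone_closed : closed C.
Proof.
have -> : C = \bigcap_(x in P) ((fun y => x + y) @^-1` P).
  by apply/seteqP; split => y /= h x Px; exact: h.
apply: closed_bigI => x _; apply: preimage_closed; last exact: polyhedron_closed.
by move=> y _; apply: continuousD; [exact: cst_continuous | exact: cvg_id].
Qed.

Definition active x : {set 'I_m} := [set i | arow i x == b i 0].

(* Otherwise [x] is the midpoint of a segment of [P] on the line through [x] and [y]. *)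
Lemma vertex_active_eq x y : vertex P x -> P y -> active x \subset active y -> x = y.
Proof.
move=> [Px vx] Py /fintype.subsetP act_xy.
have slack_ge0 i : 0 <= b i 0 - arow i x by rewrite subr_ge0; exact: Px.
have slack_gt0 i : 0 < arow i x - arow i y -> 0 < b i 0 - arow i x.
  rewrite !subr_gt0 => lt_yx; rewrite lt_neqAle (Px i) andbT; apply/negP => tight.
  have := act_xy i; rewrite !inE tight => /(_ isT) /eqP e.
  by move: lt_yx; rewrite e (eqP tight) ltxx.
have [t t0 [t1 ht]] := exists_small_scale slack_ge0 slack_gt0.
pose z1 := x + t *: (x - y); pose z2 := (1 - t) *: x + (1 - (1 - t)) *: y.
have Pz1 : P z1.
  move=> i; rewrite -/(arow i _) arowD arowZ arowB.
  by have := ht i; rewrite lerBrDr addrC.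
have Pz2 : P z2 by apply: polyhedron_convex => //; rewrite subr_ge0 t1 lerBlDr lerDl ltW.
have half : 0 < (2^-1 : R) < 1 by rewrite invr_gt0 ltr0n /= invf_lt1 ?ltr0n // ltr1n.
have /(vx _ _ _ Pz1 Pz2 half) /matrixP z12 : x = 2^-1 *: z1 + (1 - 2^-1) *: z2.
  by apply/matrixP => i j; rewrite !mxE; field.
have : t *: (x - y) = 0.
  apply/matrixP => i j; have := z12 i j; rewrite !mxE => e.
  have -> : t * (x i j - y i j) = ((x i j + t * (x i j - y i j)) -
     ((1 - t) * x i j + (1 - (1 - t)) * y i j)) / 2 by field.
  by rewrite e subrr mul0r.
by move/eqP; rewrite scaler_eq0 gt_eqF //= subr_eq0 => /eqP.
Qed.

Lemma vertex_finite : finite_set (vertex P).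
Proof.
pose w J := xget 0 [set x | vertex P x /\ active x = J].
apply: (sub_finite_set _ (finite_image w (@finite_finset _ setT))) => x vx.
have ex : exists y, vertex P y /\ active y = active x by exists x.
exists (active x) => //; have [vw aw] := xgetPex 0 ex.
by apply/esym/vertex_active_eq => //; [case: vw | rewrite aw].
Qed.

Definition vertex_seq : seq 'cV[R]_n := finmap.enum_fset (fset_set (vertex P)).

Lemma KPE : KP P = conv_hull [set x | x \in vertex_seq].
Proof.
rewrite /KP; congr conv_hull; apply/seteqP; split => x /=;
  by rewrite in_fset_set ?inE //; exact: vertex_finite.
Qed.

Lemma KP_compact : compact (KP P).
Proof. by rewrite KPE; exact: conv_hull_seq_compact. Qed.

Lemma KP_closed : closed (KP P).
Proof. exact: compact_closed (@norm_hausdorff _ _) KP_compact. Qed.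

Lemma KP_convex x y t : KP P x -> KP P y -> 0 <= t <= 1 -> KP P (t *: x + (1 - t) *: y).
Proof. by rewrite KPE; exact: conv_hull_seq_convex. Qed.

Lemma KP_bounded : exists2 M, 0 <= M & forall x, KP P x -> `|x| <= M.
Proof.
exists (\sum_(v <- vertex_seq) `|v|); first by apply: sumr_ge0.
by rewrite KPE; exact: conv_hull_seq_norm_le.
Qed.

Definition feasible q := [set x | KP P x /\ C (q - x)].

Lemma ray_exit {p d} : P p -> (forall i, arow i p = b i 0 -> arow i d = 0) ->
    (exists j, 0 < arow j d) ->
  exists2 s, 0 < s & P (p + s *: d) /\ (#|~: active (p + s *: d)| < #|~: active p|)%N.
Proof.
move=> Pp hd [j0 hj0].
pose ratio j := (b j 0 - arow j p) / arow j d.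
have [jm jpos jmin] := @arg_minP _ _ _ j0 (fun j => 0 < arow j d) ratio hj0.
have slack j : 0 < arow j d -> 0 < b j 0 - arow j p.
  move=> hj; rewrite subr_gt0 lt_neqAle (Pp j) andbT; apply/eqP => e.
  by rewrite (hd j e) ltxx in hj.
exists (ratio jm); first by rewrite divr_gt0 // slack.
split.
  move=> i; rewrite -/(arow i _) arowD arowZ.
  have [hi|hi] := leP (arow i d) 0.
    apply: le_trans (Pp i); rewrite -/(arow i p) gerDl mulr_ge0_le0 //.
    by rewrite ltW // divr_gt0 // slack.
  rewrite -lerBrDl; apply: le_trans (ler_wpM2r (ltW hi) (jmin i hi)) _.
  by rewrite /ratio divfK // gt_eqF.
have sub : ~: active (p + ratio jm *: d) \subset (~: active p) :\ jm.
  apply/fintype.subsetP => i; rewrite !inE arowD arowZ => ne; apply/andP; split.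
    apply/eqP => e; move: ne.
    by rewrite e /ratio divfK ?(gt_eqF jpos) // addrC subrK eqxx.
  by apply: contra ne => /eqP e; rewrite (hd i e) mulr0 addr0 e.
have jin : jm \in ~: active p.
  by rewrite !inE; apply/eqP => /hd e; rewrite e ltxx in jpos.
apply: leq_ltn_trans (subset_leq_card sub) _.
by rewrite (cardsD1 jm (~: active p)) jin add1n ltnSn.
Qed.

Lemma feasible_neq0_ray {p e} :
    (forall q, P q -> (#|~: active q| < #|~: active p|)%N -> feasible q !=set0) ->
    P p -> (forall i, arow i p = b i 0 -> arow i e = 0) ->
    (exists j, 0 < arow j e) -> (forall j, 0 <= arow j e) ->
  feasible p !=set0.
Proof.
move=> IH Pp he ex e_ge0.
have [s s0 [Pq lt_q]] := ray_exit Pp he ex.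
have [x [Kx Cx]] := IH _ Pq lt_q; exists x; split => //.
have -> : p - x = (p + s *: e - x) + s *: (- e) by rewrite scalerN addrAC addrK.
apply: char_coneD => //; apply: char_coneP => i.
by rewrite arowZ arowN mulrN oppr_le0 mulr_ge0 // ltW.
Qed.

Lemma nonvertex_tangent {p} : P p -> ~ vertex P p ->
  exists2 d, d != 0 & forall i, arow i p = b i 0 -> arow i d = 0.
Proof.
move=> Pp nvp.
have [y [z [t [Py [Pz [ht [ep nyz]]]]]]] :
    exists y z t, P y /\ P z /\ 0 < t < 1 /\ p = t *: y + (1 - t) *: z /\ y <> z.
  apply: contrapT => H; apply: nvp; split => // y z t Py Pz ht e.
  by apply: contrapT => ne; apply: H; exists y, z, t.
exists (y - z); first by rewrite subr_eq0; apply/eqP.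
move=> i tight.
have e : t * arow i y + (1 - t) * arow i z = b i 0 by rewrite -tight ep arowD !arowZ.
have ht' : 0 < 1 - t < 1 by case/andP: ht => t0 t1; rewrite subr_gt0 t1 /= gtrBl t0.
have ey := conv_eq_ub ht (Py i) (Pz i) e.
have ez : arow i z = b i 0.
  by apply: (conv_eq_ub ht' (Pz i) (Py i)); rewrite -e /arow; ring.
by rewrite arowB ez; rewrite /arow in ey *; rewrite ey subrr.
Qed.

(* Through a non-vertex [p] passes a
   line keeping the tight constraints of [p] tight; moving along it until a new
   constraint becomes tight in both directions, [p] is a convex combination of two
   tighter points, and if this is possible in one direction only, the other one
   lies in the characteristic cone. *)
Lemma feasible_neq0 {p} : pointed P -> P p -> feasible p !=set0.
Proof.
move=> ptd; move Hk : #|~: active p| => k.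
elim/ltn_ind: k p Hk => k IHk p Hk Pp.
have IH q : P q -> (#|~: active q| < #|~: active p|)%N -> feasible q !=set0.
  by move=> Pq; rewrite Hk => lt; exact: (IHk _ lt q erefl Pq).
have [vp|nvp] := pselect (vertex P p).
  by exists p; split; [exact: subset_conv_hull | rewrite subrr; exact: char_cone0].
have [d0 d0_neq0 hd0] := nonvertex_tangent Pp nvp.
have [d [j1 hj1] hd] : exists2 d, (exists j, 0 < arow j d) &
    forall i, arow i p = b i 0 -> arow i d = 0 /\ arow i (- d) = 0.
  have tangentN i : arow i p = b i 0 -> arow i d0 = 0 /\ arow i (- d0) = 0.
    by move=> /hd0 e; rewrite arowN e oppr0.
  have [pos|npos] := pselect (exists j, 0 < arow j d0); first by exists d0.
  exists (- d0) => [|i /tangentN [e eN]]; last by rewrite opprK.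
  apply: contrapT => nneg; apply: (negP d0_neq0); apply/eqP/ptd; apply: char_coneP => j.
    by rewrite leNgt; apply/negP => ?; apply: npos; exists j.
  by rewrite leNgt; apply/negP => ?; apply: nneg; exists j.
have [[j2 hj2]|nneg] := pselect (exists j, 0 < arow j (- d)); last first.
  apply: (feasible_neq0_ray IH Pp (fun i e => (hd i e).1)); first by exists j1.
  move=> j; rewrite -oppr_le0 -arowN leNgt; apply/negP => ?.
  by apply: nneg; exists j.
have [s1 s1_gt0 [P1 lt1]] := ray_exit Pp (fun i e => (hd i e).1) (ex_intro _ j1 hj1).
have [s2 s2_gt0 [P2 lt2]] := ray_exit Pp (fun i e => (hd i e).2) (ex_intro _ j2 hj2).
have [x1 [Kx1 Cx1]] := IH _ P1 lt1.
have [x2 [Kx2 Cx2]] := IH _ P2 lt2.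
have s12_gt0 : 0 < s1 + s2 by rewrite addr_gt0.
pose t := s2 / (s1 + s2).
have t01 : 0 <= t <= 1.
  apply/andP; split; first by rewrite divr_ge0 // ltW.
  by rewrite ler_pdivrMr // mul1r lerDr ltW.
exists (t *: x1 + (1 - t) *: x2); split; first exact: KP_convex.
have -> : p - (t *: x1 + (1 - t) *: x2) =
    t *: (p + s1 *: d - x1) + (1 - t) *: (p + s2 *: - d - x2).
  by apply/matrixP => i j; rewrite !mxE /t; field; rewrite gt_eqF.
exact: char_cone_convex.
Qed.

Lemma feasible_compact p : compact (feasible p).
Proof.
apply: (subclosed_compact _ KP_compact); last by move=> x [].
apply: closedI; first exact: KP_closed.
apply: preimage_closed; last exact: char_cone_closed.
by move=> x _; apply: continuousB; [exact: cst_continuous | exact: cvg_id].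
Qed.

Lemma is_baseE p x : is_base P p x <->
  feasible p x /\ forall y, feasible p y -> sqnorm (p - x) <= sqnorm (p - y).
Proof.
split => [[Kx [Cx min]]|[[Kx Cx] min]].
  by split => // y [Ky Cy]; rewrite -enorm_le; exact: min.
by do 2!split => //; move=> y Ky Cy; rewrite enorm_le; exact: min.
Qed.

Lemma base_exists p : pointed P -> P p -> exists x, is_base P p x.
Proof.
move=> ptd Pp; have [x0 Fx0] := feasible_neq0 ptd Pp.
have cont : {within feasible p, continuous (fun x => sqnorm (p - x))}.
  apply: continuous_subspaceT => x; apply: continuous_comp; last exact: sqnorm_continuous.
  by apply: continuousB; [exact: cst_continuous | exact: cvg_id].
have [x /set_mem Fx xmin] :=
  compact_EVT_min (ex_intro _ x0 Fx0) (feasible_compact p) cont.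
by exists x; apply/is_baseE; split => // y Fy; apply/xmin/mem_set.
Qed.

(* Strict convexity of the squared norm: the midpoint of two minimisers is feasible
   and would be strictly better. *)
Lemma base_unique p x y : is_base P p x -> is_base P p y -> x = y.
Proof.
move=> /is_baseE [[Kx Cx] xmin] /is_baseE [[Ky Cy] ymin].
have half : 0 <= (2^-1 : R) <= 1 by rewrite invr_ge0 ler0n /= invf_le1 ?ltr0n // ler1n.
have midE : p - (2^-1 *: x + (1 - 2^-1) *: y) = 2^-1 *: (p - x) + (1 - 2^-1) *: (p - y).
  by apply/matrixP => i j; rewrite !mxE; ring.
have Fmid : feasible p (2^-1 *: x + (1 - 2^-1) *: y).
  by split; [exact: KP_convex | rewrite midE; exact: char_cone_convex].
have := xmin _ Fmid; rewrite midE sqnorm_midpoint.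
have -> : sqnorm (p - y) = sqnorm (p - x).
  by apply/eqP; rewrite eq_le ymin ?xmin //; split.
have -> : p - x - (p - y) = y - x by rewrite opprB addrC addrA subrK.
have := sqnorm_ge0 (y - x); set s := sqnorm (y - x) => s_ge0 le_s.
by apply/esym/eqP; rewrite -subr_eq0 -sqnorm_eq0 -/s eq_le s_ge0 andbT; lra.
Qed.

Lemma base_is_base {p} : pointed P -> P p -> is_base P p (base P p).
Proof. by move=> ptd Pp; apply: xgetPex; exact: base_exists. Qed.

Lemma arow_le_norm i d : arow i d <= (\sum_j `|A i j|) * `|d|.
Proof.
rewrite /arow mxE mulr_suml; apply: ler_sum => j _.
by apply: le_trans (ler_norm _) _; rewrite normrM ler_wpM2l ?mx_norm_ge_entry.
Qed.

(* Along a direction towards a point of [P], only constraints slack at [p] increase. *)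
Lemma polyhedron_reach {p} : P p -> exists2 r, 0 < r &
  forall q t, P q -> 0 <= t -> t * `|q - p| <= r -> P (p + t *: (q - p)).
Proof.
move=> Pp.
pose c i := if arow i p == b i 0 then 0 else \sum_j `|A i j|.
have slack_ge0 i : 0 <= b i 0 - arow i p by rewrite subr_ge0; exact: Pp.
have slack_gt0 i : 0 < c i -> 0 < b i 0 - arow i p.
  rewrite /c; case: eqP => [_|ne _]; first by rewrite ltxx.
  by rewrite subr_gt0 lt_neqAle (Pp i) andbT; apply/eqP.
have [r r0 [_ hr]] := exists_small_scale slack_ge0 slack_gt0.
exists r => // q t Pq t0 tr i; rewrite -/(arow i _) arowD arowZ.
have [di_le0|di_gt0] := leP (arow i (q - p)) 0.
  by apply: le_trans (Pp i); rewrite -/(arow i p) gerDl mulr_ge0_le0.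
have slack_i : arow i p != b i 0.
  apply/eqP => tight; have := Pq i; rewrite -/(arow i q).
  by rewrite -(subrK p q) arowD tight gerDr leNgt di_gt0.
rewrite -lerBrDl; apply: le_trans (hr i); rewrite /c (negbTE slack_i).
apply: le_trans (ler_wpM2l t0 (arow_le_norm i _)) _.
by rewrite mulrCA mulrC ler_wpM2r // sumr_ge0.
Qed.

(* The witness for [q] interpolates between [x0] and a feasible point for the point
   of [P] at distance [r] from [p] in the direction of [q]. *)
Lemma feasible_lsc {p x0 e} : pointed P -> P p -> feasible p x0 -> 0 < e ->
  exists2 eta, 0 < eta &
    forall q, P q -> `|q - p| < eta -> exists2 y, feasible q y & `|y - x0| < e.
Proof.
move=> ptd Pp [Kx0 Cx0] e0.
have [r r0 reach] := polyhedron_reach Pp.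
have [M M0 KM] := KP_bounded.
have M1_gt0 : 0 < 2 * M + 1 by rewrite ltr_wpDl ?mulr_ge0.
exists (Num.min r (e * r / (2 * M + 1))); first by rewrite lt_min r0 /= !mulr_gt0 ?invr_gt0.
move=> q Pq; rewrite lt_min => /andP[qr qe].
have [->|qp] := eqVneq q p; first by exists x0; [split | rewrite subrr normr0].
have d_gt0 : 0 < `|q - p| by rewrite normr_gt0 subr_eq0.
have /(feasible_neq0 ptd) [y1 [Ky1 Cy1]] : P (p + r / `|q - p| *: (q - p)).
  by apply: reach => //; [rewrite divr_ge0 ?ltW | rewrite divfK ?gt_eqF].
pose s := `|q - p| / r.
have s01 : 0 <= s <= 1.
  by apply/andP; split; [rewrite divr_ge0 ?ltW | rewrite /s ler_pdivrMr // mul1r ltW].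
exists (s *: y1 + (1 - s) *: x0); first split; first exact: KP_convex.
  have -> : q - (s *: y1 + (1 - s) *: x0) =
      s *: (p + r / `|q - p| *: (q - p) - y1) + (1 - s) *: (p - x0).
    by apply/matrixP => i j; rewrite /s !mxE; field; rewrite !gt_eqF.
  exact: char_cone_convex.
have -> : s *: y1 + (1 - s) *: x0 - x0 = s *: (y1 - x0).
  by apply/matrixP => i j; rewrite !mxE; ring.
have y1x0 : `|y1 - x0| <= 2 * M.
  by apply: le_trans (ler_normB _ _) _; rewrite mulr2n mulrDl mul1r lerD ?KM.
rewrite normrZ ger0_norm ?divr_ge0 ?ltW //.
apply: le_lt_trans (ler_wpM2l (divr_ge0 (ltW d_gt0) (ltW r0)) y1x0) _.
have : `|q - p| * (2 * M + 1) < e * r by rewrite -ltr_pdivlMr.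
rewrite mulrAC ltr_pdivrMr //; apply: le_lt_trans.
by rewrite ler_wpM2l ?(ltW d_gt0) // lerDl.
Qed.

Lemma base_feasible {p} : pointed P -> P p -> feasible p (base P p).
Proof. by move=> ptd Pp; have /is_baseE [] := base_is_base ptd Pp. Qed.

Lemma base_min {p y} : pointed P -> P p -> feasible p y ->
  sqnorm (p - base P p) <= sqnorm (p - y).
Proof. by move=> ptd Pp; have /is_baseE [_] := base_is_base ptd Pp; apply. Qed.

Lemma cluster_base_near (p z : 'cV[R]_n) : cluster (base P @ within P (nbhs p)) z ->
  forall eta, 0 < eta -> exists q, [/\ P q, `|q - p| < eta & `|z - base P q| < eta].
Proof.
move=> clz eta eta0.
pose near_p := [set x | exists q, [/\ P q, `|q - p| < eta & x = base P q]].
have : (base P @ within P (nbhs p)) near_p.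
  apply/nbhs_ballP; exists eta => // q pq Pq; exists q; split => //.
  by move: pq; rewrite -ball_normE /= distrC.
move=> /(clz _ _)/(_ (nbhsx_ballx z _ eta0)) [_ [[q [Pq qp ->]] zq]].
by exists q; split => //; move: zq; rewrite -ball_normE.
Qed.

Lemma cluster_base_feasible {p z : 'cV[R]_n} : pointed P ->
  cluster (base P @ within P (nbhs p)) z -> feasible p z.
Proof.
move=> ptd /cluster_base_near near_z; split.
  apply: KP_closed => B /nbhs_ballP [eta eta0 hB].
  have [q [Pq _ zq]] := near_z _ eta0.
  exists (base P q); split; first by have [] := base_feasible ptd Pq.
  by apply: hB; rewrite -ball_normE.
apply: char_cone_closed => B /nbhs_ballP [eta eta0 hB].
have eta2 : 0 < eta / 2 by rewrite divr_gt0.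
have [q [Pq qp zq]] := near_z _ eta2.
exists (q - base P q); split; first by have [] := base_feasible ptd Pq.
apply: hB; rewrite -ball_normE /=.
have -> : p - z - (q - base P q) = - (q - p) + (base P q - z).
  by apply/matrixP => i j; rewrite !mxE; ring.
apply: le_lt_trans (ler_normD _ _) _; rewrite normrN.
by rewrite [`|base P q - z|]distrC (splitr eta) ltrD.
Qed.

(* Near [p], [base P q] is close to [z] while some feasible point of [q] is close
   to [base P p]; compare their squared distances to [q] and let [q] tend to [p]. *)
Lemma cluster_base_le {p z : 'cV[R]_n} : pointed P -> P p ->
  cluster (base P @ within P (nbhs p)) z -> sqnorm (p - z) <= sqnorm (p - base P p).
Proof.
move=> ptd Pp /cluster_base_near near_z; set x0 := base P p.
apply/ler_addgt0Pr => e e0; have e2 : 0 < e / 2 by rewrite divr_gt0.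
have [d1 d1_gt0 cont_z] := continuous_dist_lt (p - z) sqnorm_continuous e2.
have [d2 d2_gt0 cont_x0] := continuous_dist_lt (p - x0) sqnorm_continuous e2.
have d22 : 0 < d2 / 2 by rewrite divr_gt0.
have [eta eta0 lsc] := feasible_lsc ptd Pp (base_feasible ptd Pp) d22.
pose g := Num.min (d1 / 2) (Num.min eta (d2 / 2)).
have g0 : 0 < g by rewrite !lt_min !divr_gt0 //= eta0.
have [q [Pq qp zq]] := near_z _ g0.
have g_d1 : g <= d1 / 2 by rewrite ge_min lexx.
have g_eta : g <= eta by rewrite !ge_min lexx orbT.
have g_d2 : g <= d2 / 2 by rewrite !ge_min lexx !orbT.
have [y Fy yx0] := lsc q Pq (lt_le_trans qp g_eta).
have near_z_sq : `|sqnorm (q - base P q) - sqnorm (p - z)| < e / 2.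
  apply: cont_z.
  have -> : q - base P q - (p - z) = (q - p) + (z - base P q).
    by apply/matrixP => i j; rewrite !mxE; ring.
  apply: le_lt_trans (ler_normD _ _) _.
  by rewrite (splitr d1) ltrD // (lt_le_trans _ g_d1).
have near_x0_sq : `|sqnorm (q - y) - sqnorm (p - x0)| < e / 2.
  apply: cont_x0.
  have -> : q - y - (p - x0) = (q - p) - (y - x0).
    by apply/matrixP => i j; rewrite !mxE; ring.
  apply: le_lt_trans (ler_normB _ _) _.
  by rewrite (splitr d2) ltrD // (lt_le_trans qp g_d2).
have := base_min ptd Pq Fy.
by move: near_z_sq near_x0_sq => /ltr_normlP [? ?] /ltr_normlP [? ?]; lra.
Qed.

Lemma base_continuous_at p : pointed P -> P p ->
  base P @ within P (nbhs p) --> base P p.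
Proof.
move=> ptd Pp.
have PF : ProperFilter (within P (nbhs p)).
  by rewrite nbhs_subspace_in //; exact: nbhs_subspace_filter.
apply: (@cluster_sub1_cvg _ _ (KP P)); first exact: KP_compact.
  by apply: filterS (withinT _ _) => q Pq; have [] := base_feasible ptd Pq.
move=> z clz; apply: base_unique (base_is_base ptd Pp); apply/is_baseE.
split; first exact: cluster_base_feasible ptd clz.
by move=> y Fy; apply: le_trans (cluster_base_le ptd Pp clz) (base_min ptd Pp Fy).
Qed.

End Polyhedron.

Theorem mainTheorem10 (R : realType) (n : nat) (P : set 'cV[R]_n) :
  polyhedral P -> pointed P -> full_dim P ->
  {within P, continuous (base P)}.
Proof.
move=> [m [A [b ->]]] ptd _.
by apply/subspace_continuousP => p Pp; exact: base_continuous_at.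
Qed.
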